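(* Let $\mathcal{P}\subset K[x_1,\ldots,x_n]$ be a chordal polynomial set with $x_1<\cdots<x_n$ as a perfect elimination ordering. Consider a successive reduction $\overline{\mathrm{red}}_n(\mathcal{P}),\overline{\mathrm{red}}_{n-1}(\mathcal{P}),\ldots,\overline{\mathrm{red}}_1(\mathcal{P})$. Assume that for each $i=n,\ldots,1$ with $\overline{\mathrm{red}}_{i+1}(\mathcal{P})^{(i)}\neq\emptyset$, the reduction data $(T_i,\mathcal{R}_i)$ used at step $i$ satisfies $\mathrm{supp}(T_i)=\mathrm{supp}\big(\overline{\mathrm{red}}_{i+1}(\mathcal{P})^{(i)}\big)$. Then $G(\overline{\mathrm{red}}_1(\mathcal{P}))=G(\mathcal{P})$.
   Context: Let $K$ be a field and $K[x_1,\ldots,x_n]$ the polynomial ring, with the variables ordered $x_1<\cdots<x_n$. For a polynomial $F$, $\mathrm{supp}(F)$ is the set of variables effectively appearing in $F$. For a set of polynomials $\mathcal{P}$, $\mathrm{supp}(\mathcal{P})=\bigcup_{F\in\mathcal{P}}\mathrm{supp}(F)$. For a nonconstant $F$, $\mathrm{lv}(F)$ is the greatest variable in $\mathrm{supp}(F)$. For a polynomial set $\mathcal{P}$ and $1\le i\le n$, $\mathcal{P}^{(i)}=\{P\in\mathcal{P}:\mathrm{lv}(P)=x_i\}$; constants belong to no $\mathcal{P}^{(i)}$. The associated graph $G(\mathcal{P})$ is the undirected graph whose vertex set is $\mathrm{supp}(\mathcal{P})$, with an edge between distinct $x_i,x_j$ iff some $F\in\mathcal{P}$ has $x_i,x_j\in\mathrm{supp}(F)$.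 For graphs, $G\subseteq G'$ means that $G$ is a subgraph of $G'$, i.e. both the vertex set and the edge set are contained. An ordering of the vertices of a graph is a perfect elimination ordering if, for every vertex $v$, the set consisting of $v$ and all neighbours of $v$ smaller than $v$ is a clique. A polynomial set $\mathcal{P}$ is called chordal with $x_1<\cdots<x_n$ as a perfect elimination ordering if the restriction of this ordering to $\mathrm{supp}(\mathcal{P})$ is a perfect elimination ordering of $G(\mathcal{P})$. Reduction step: let $\mathcal{S}$ be a polynomial set and $1\le i\le n$ with $\mathcal{S}^{(i)}\neq\emptyset$. Reduction data for $(\mathcal{S},i)$ is a pair $(T_i,\mathcal{R}_i)$ such that: - $T_i\in K[x_1,\ldots,x_i]\setminus K[x_1,\ldots,x_{i-1}]$ and $\mathcal{R}_i\subset K[x_1,\ldots,x_{i-1}]$, where $K[x_1,\ldots,x_0]=K$; - $\mathrm{supp}(T_i)\subseteq\mathrm{supp}(\mathcal{S}^{(i)})$ and $\mathrm{supp}(\mathcal{R}_i)\subseteq\mathrm{supp}(\mathcal{S}^{(i)})$. Such a pair arises, for example, from $T_i$ and pseudo-remainders. Given such a pair, $$\mathrm{red}_i(\mathcal{S})=\bigcup_{j>i}\mathcal{S}^{(j)}\ \cup\ \{T_i\}\ \cup\ \bigcup_{j<i}\big(\mathcal{S}^{(j)}\cup\mathcal{R}_i^{(j)}\big).$$ If $\mathcal{S}^{(i)}=\emptyset$, set $\mathrm{red}_i(\mathcal{S})=\bigcup_{j}\mathcal{S}^{(j)}$. Successive reduction: $\overline{\mathrm{red}}_{n+1}(\mathcal{P})=\mathcal{P}$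 and $\overline{\mathrm{red}}_i(\mathcal{P})=\mathrm{red}_i(\overline{\mathrm{red}}_{i+1}(\mathcal{P}))$ for $i=n,\ldots,1$. At each step some reduction data for $(\overline{\mathrm{red}}_{i+1}(\mathcal{P}),i)$ is chosen. *)

From HB Require Import structures.
From mathcomp Require Import all_boot all_algebra.
Set Implicit Arguments. Unset Strict Implicit. Unset Printing Implicit Defensive.

(* Variables x_1 < ... < x_n are indexed 0-based by 'I_n : the ordinal i stands
   for x_(i+1); the variable order is the order on ordinals. *)

Record mpoly (K : fieldType) (n : nat) := MPoly {
  mcoef : n.-tuple nat -> K;
  mcoef_fin : exists s : seq (n.-tuple nat), forall m, mcoef m != 0%R -> m \in s }.

Definition msupp (K : fieldType) (n : nat) (F : mpoly K n) (i : 'I_n) : Prop :=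
  exists m : n.-tuple nat, mcoef F m != 0%R /\ (0 < tnth m i)%N.

Definition polyset (K : fieldType) (n : nat) := mpoly K n -> Prop.

Definition has_lv (K : fieldType) (n : nat) (F : mpoly K n) (i : 'I_n) : Prop :=
  msupp F i /\ forall j : 'I_n, msupp F j -> (j <= i)%N.

Definition level (K : fieldType) (n : nat) (S : polyset K n) (i : 'I_n) : polyset K n :=
  fun F => S F /\ has_lv F i.

Definition set_supp (K : fieldType) (n : nat) (S : polyset K n) (i : 'I_n) : Prop :=
  exists F, S F /\ msupp F i.

(* F in K[x_1,...,x_i] (0-based: all variables of F have index < i) *)
Definition in_lower (K : fieldType) (n : nat) (F : mpoly K n) (i : nat) : Prop :=
  forall j : 'I_n, msupp F j -> (j < i)%N.

Definition G_edge (K : fieldType) (n : nat) (S : polyset K n) (a b : 'I_n) : Prop :=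
  a != b /\ exists F, S F /\ msupp F a /\ msupp F b.

Definition same_graph (K : fieldType) (n : nat) (S1 S2 : polyset K n) : Prop :=
  (forall i, set_supp S1 i <-> set_supp S2 i) /\
  (forall a b, G_edge S1 a b <-> G_edge S2 a b).

(* x_1 < ... < x_n (restricted to supp(S)) is a perfect elimination ordering of G(S):
   for every vertex v, {v} ∪ {smaller neighbours of v} is a clique. *)
Definition chordal (K : fieldType) (n : nat) (S : polyset K n) : Prop :=
  forall v u w : 'I_n, set_supp S v ->
    (u = v \/ (G_edge S u v /\ (u < v)%N)) ->
    (w = v \/ (G_edge S w v /\ (w < v)%N)) ->
    u != w -> G_edge S u w.

Definition red_data (K : fieldType) (n : nat) (S : polyset K n) (i : 'I_n)
    (T : mpoly K n) (R : polyset K n) : Prop :=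
  [/\ in_lower T i.+1 /\ ~ in_lower T i,
      (forall F, R F -> in_lower F i),
      (forall j, msupp T j -> set_supp (level S i) j) &
      (forall j, set_supp R j -> set_supp (level S i) j)].

Definition red (K : fieldType) (n : nat) (S : polyset K n) (i : 'I_n)
    (T : mpoly K n) (R : polyset K n) : polyset K n :=
  fun F => (exists j : 'I_n, (i < j)%N /\ level S j F) \/ F = T \/
           (exists j : 'I_n, (j < i)%N /\ (level S j F \/ level R j F)).

Definition red_empty (K : fieldType) (n : nat) (S : polyset K n) : polyset K n :=
  fun F => exists j : 'I_n, level S j F.

(* S k = \overline{red}_{k+1}(P) for k = n, ..., 0 (0-based step index),
   with reduction data (T i, R i) chosen at step i. *)
Definition successive_reduction (K : fieldType) (n : nat) (P : polyset K n)
    (S : nat -> polyset K n) (T : 'I_n -> mpoly K n) (R : 'I_n -> polyset K n) : Prop :=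
  (forall F, S n F <-> P F) /\
  forall i : 'I_n,
    ((exists F, level (S i.+1) i F) ->
       red_data (S i.+1) i (T i) (R i) /\
       (forall F, S i F <-> red (S i.+1) i (T i) (R i) F)) /\
    (~ (exists F, level (S i.+1) i F) ->
       forall F, S i F <-> red_empty (S i.+1) F).

(* Reduction replaces the polynomials of level i by T_i and by polynomials in
   lower variables, all supported in supp(S^(i)).  For a perfect elimination
   ordering these variables form a clique of G(S), so no new edge appears, and
   since supp(T_i) = supp(S^(i)) every vertex and edge carried by a polynomial
   of level i is still carried by T_i.  Hence each reduction step preserves the
   graph, and with it chordality, and the theorem follows by induction. *)

From HB Require Import structures.
From mathcomp Require Import all_boot all_algebra.
From Stdlib Require Import Classical.

Set Implicit Arguments.
Unset Strict Implicit.

Section Graph.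

Variables (K : fieldType) (n : nat).
Implicit Types (F G T : mpoly K n) (S : polyset K n).

Lemma has_lv_of_msupp F a : msupp F a -> exists j, has_lv F j.
Proof.
suff lv_above k (b : 'I_n) : (n - b <= k)%N -> msupp F b -> exists j, has_lv F j.
  exact: lv_above (leq_subr a n).
elim: k b => [|k IHk] b le_nb Fb.
  by move: le_nb; rewrite leqn0 subn_eq0 leqNgt ltn_ord.
case: (classic (forall j : 'I_n, msupp F j -> (j <= b)%N)) => [top_b|].
  by exists b.
case/not_all_ex_not=> j /(imply_to_and (msupp F j))[Fj /negP]; rewrite -ltnNge => lt_bj.
apply: (IHk j) => //; rewrite -ltnS (leq_trans _ le_nb) // ltn_sub2l //.
Qed.

Lemma same_graph_trans S1 S2 S3 :
  same_graph S1 S2 -> same_graph S2 S3 -> same_graph S1 S3.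
Proof.
by move=> [V12 E12] [V23 E23]; split=> *; [rewrite V12 V23|rewrite E12 E23].
Qed.

Lemma chordal_same_graph S1 S2 : same_graph S1 S2 -> chordal S2 -> chordal S1.
Proof.
move=> [V E] chS v u w /V Sv Hu Hw uw; apply/E; apply: (chS v) => //.
  by case: Hu => [->|[/E]]; [left|right].
by case: Hw => [->|[/E]]; [left|right].
Qed.

Lemma same_graph_clique_cover S1 S2 (C : 'I_n -> Prop) :
  (forall a, C a -> set_supp S2 a) ->
  (forall a b, a != b -> C a -> C b -> G_edge S2 a b) ->
  (forall F, S1 F -> S2 F \/ forall j, msupp F j -> C j) ->
  (forall G a, S2 G -> msupp G a ->
     S1 G \/ exists F, S1 F /\ forall j, msupp G j -> msupp F j) ->
  same_graph S1 S2.
Proof.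
move=> suppC cliqueC new_sub old_cov; split=> [a|a b]; split.
- move=> [F [/new_sub[S2F|inC] Fa]]; [by exists F|exact/suppC/inC].
- move=> [G [S2G Ga]]; case: (old_cov G a S2G Ga) => [S1G|[F [S1F subF]]].
    by exists G.
  by exists F; split; last exact: subF.
- move=> [ab [F [/new_sub[S2F|inC] [Fa Fb]]]]; last exact: cliqueC (inC _ _) (inC _ _).
  by split=> //; exists F.
- move=> [ab [G [S2G [Ga Gb]]]]; split=> //.
  case: (old_cov G a S2G Ga) => [S1G|[F [S1F subF]]]; first by exists G.
  by exists F; split=> //; split; apply: subF.
Qed.

Lemma same_graph_ext S1 S2 : (forall F, S1 F <-> S2 F) -> same_graph S1 S2.
Proof.
move=> eqS; apply: (same_graph_clique_cover (C := fun=> False)) => //.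
- by move=> F /eqS; left.
- by move=> G a /eqS; left.
Qed.

Lemma same_graph_red_empty S : same_graph (red_empty S) S.
Proof.
apply: (same_graph_clique_cover (C := fun=> False)) => //.
- by move=> F [j [SF _]]; left.
- by move=> G a SG /has_lv_of_msupp[j lvG]; left; exists j.
Qed.

Lemma chordal_level_clique S i a b : chordal S -> a != b ->
  set_supp (level S i) a -> set_supp (level S i) b -> G_edge S a b.
Proof.
move=> chS ab La Lb.
have smaller_nbr c : set_supp (level S i) c -> c = i \/ (G_edge S c i /\ (c < i)%N).
  move=> [G [[SG [Gi top_i]] Gc]]; case: (eqVneq c i) => [->|ci]; first by left.
  right; split; first by split=> //; exists G.
  by rewrite ltn_neqAle ci top_i.
have [G [[SG [Gi _]] _]] := La.
by apply: (chS i) => //; [exists G|apply: smaller_nbr|apply: smaller_nbr].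
Qed.

Lemma same_graph_red S i T R : chordal S -> red_data S i T R ->
  (forall j, msupp T j <-> set_supp (level S i) j) ->
  same_graph (red S i T R) S.
Proof.
move=> chS [_ _ _ suppR] suppT.
apply: (same_graph_clique_cover (C := set_supp (level S i))).
- by move=> a [F [[SF _] Fa]]; exists F.
- by move=> a b; apply: chordal_level_clique.
- move=> F [[j [_ [SF _]]]|[->|[j [_ [[SF _]|[RF _]]]]]]; try by left.
    by right=> j; rewrite suppT.
  by right=> k Fk; apply: suppR; exists F.
- move=> G a SG /has_lv_of_msupp[l lvG].
  case: (ltngtP i l) => [lt_il|lt_li|/val_inj eq_il].
  + by left; left; exists l.
  + by left; right; right; exists l; split=> //; left.
  + right; exists T; split; first by right; left.
    by move=> j Gj; apply/suppT; exists G; rewrite eq_il.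
Qed.

End Graph.

Theorem proposition3p3 (K : fieldType) (n : nat) (P : polyset K n)
    (S : nat -> polyset K n) (T : 'I_n -> mpoly K n) (R : 'I_n -> polyset K n) :
  chordal P ->
  successive_reduction P S T R ->
  (forall i : 'I_n, (exists F, level (S i.+1) i F) ->
     forall j : 'I_n, msupp (T i) j <-> set_supp (level (S i.+1) i) j) ->
  same_graph (S 0%N) P.
Proof.
move=> chP [SnP step] suppT.
suff graph_after d : (d <= n)%N -> same_graph (S (n - d)) P.
  by rewrite -(subnn n); apply: graph_after.
elim: d => [_|d IHd lt_dn]; first by rewrite subn0; apply: same_graph_ext.
have lt_i : (n - d.+1 < n)%N by rewrite ltn_subrL (leq_ltn_trans _ lt_dn).
pose i := Ordinal lt_i.
have Si1P : same_graph (S i.+1) P by rewrite /= -subSn // subSS; apply: IHd; apply: ltnW.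
suff: same_graph (S i) (S i.+1) by move/same_graph_trans; apply.
have [red_step empty_step] := step i.
case: (classic (exists F, level (S i.+1) i F)) => [nonempty|empty].
- have [dataT eqS] := red_step nonempty.
  apply: same_graph_trans (same_graph_ext eqS) _.
  exact: same_graph_red (chordal_same_graph Si1P chP) dataT (suppT i nonempty).
- exact: same_graph_trans (same_graph_ext (empty_step empty)) (same_graph_red_empty _).
Qed.
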